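(* For every $\lambda\ge 0$, consider the signed variant of xOrder, in which $\widehat G$ is replaced by $\widehat G^{s}(q)=\frac{k_{a,b}}{k}A(q)+\frac{k_{b,a}}{k}B(q)-\lambda\,(A(q)-B(q))$ and the dynamic programming is otherwise unchanged. Its output $O(n^a,n^b)$ is a global maximizer, over all cross-group orderings $o$ of $(\mathrm{p}^a,\mathrm{p}^b)$, of $$J^{s}(o)=\mathrm{AUC}^o-\lambda\big(\mathrm{xAUC}^o(a,b)-\mathrm{xAUC}^o(b,a)\big).$$
   Context: Setting: two disjoint finite groups $a,b$ of instances with labels $Y_u\in\{0,1\}$; $n^g,n^g_1,n^g_0$ denote size, positives and negatives of group $g$ (all $\ge1$); $n_1=n_1^a+n_1^b$, $n_0=n_0^a+n_0^b$, $k_{a,b}=n_1^an_0^b$, $k_{b,a}=n_0^an_1^b$, $k=n_0n_1$. $\mathrm{p}^a=(\mathrm{p}^{a(1)},\dots,\mathrm{p}^{a(n^a)})$, $\mathrm{p}^b=(\mathrm{p}^{b(1)},\dots,\mathrm{p}^{b(n^b)})$ are fixed orderings of the groups. A cross-group ordering is a list of all instances of $a\cup b$ preserving the relative orders within $\mathrm{p}^a$ and within $\mathrm{p}^b$; ''precedes'' means ranked higher. $\mathrm{AUC}^o=\frac{1}{n_1n_0}\#\{(u,v):Y_u=1,Y_v=0,u\text{ precedes }v\text{ in }o\}$; $\mathrm{xAUC}^o(a,b)=\frac{1}{n_1^an_0^b}\#\{(u,v):u\in a,Y_u=1,v\in b,Y_v=0,u\text{ precedes }v\}$, $\mathrm{xAUC}^o(b,a)$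 symmetrically. For $0\le i\le n^a$, $0\le j\le n^b$ and a list $q$ interleaving $\mathrm{p}^{a(1)},\dots,\mathrm{p}^{a(i)}$ and $\mathrm{p}^{b(1)},\dots,\mathrm{p}^{b(j)}$ with within-group orders preserved, let $q^{\to b}$ be $q$ followed by $\mathrm{p}^{b(j+1)},\dots,\mathrm{p}^{b(n^b)}$ and $q^{\to a}$ be $q$ followed by $\mathrm{p}^{a(i+1)},\dots,\mathrm{p}^{a(n^a)}$; $A(q)=\frac{1}{n_1^an_0^b}\#\{(u,v): u\in\{\mathrm{p}^{a(1)},..,\mathrm{p}^{a(i)}\},Y_u=1,v\in b,Y_v=0,u\text{ precedes }v\text{ in }q^{\to b}\}$, $B(q)=\frac{1}{n_1^bn_0^a}\#\{(u,v): u\in\{\mathrm{p}^{b(1)},..,\mathrm{p}^{b(j)}\},Y_u=1,v\in a,Y_v=0,u\text{ precedes }v\text{ in }q^{\to a}\}$. Dynamic programming: $O(i,0)=(\mathrm{p}^{a(1)},\dots,\mathrm{p}^{a(i)})$, $O(0,j)=(\mathrm{p}^{b(1)},\dots,\mathrm{p}^{b(j)})$; for $i=1,\dots,n^a$, $j=1,\dots,n^b$ in increasing order, $O(i,j)=O(i-1,j)\oplus\mathrm{p}^{a(i)}$ if $\widehat G^s(O(i-1,j)\oplus\mathrm{p}^{a(i)})>\widehat G^s(O(i,j-1)\oplus\mathrm{p}^{b(j)})$, and $O(i,j)=O(i,j-1)\oplus\mathrm{p}^{b(j)}$ otherwise ($\oplus$ appends an element to the end of a list). *)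

From mathcomp Require Import all_boot all_order all_algebra.
Set Implicit Arguments. Unset Strict Implicit. Unset Printing Implicit Defensive.
Import Order.TTheory GRing.Theory Num.Theory.
Local Open Scope ring_scope.

(* An instance is (g, k): g = true means group a, g = false means group b;
   k is its 0-based position in the fixed ordering p^a (resp. p^b),
   i.e. (true, k) is p^{a(k+1)}. Labels: ya (resp. yb) lists the labels of
   p^a (resp. p^b) in order. *)
Definition inst := (bool * nat)%type.

Section XOrder.
Variable R : realFieldType.
Variables ya yb : seq bool.

Definition na := size ya.
Definition nb := size yb.
Definition n1a := count id ya.
Definition n0a := count negb ya.
Definition n1b := count id yb.
Definition n0b := count negb yb.
Definition n1 := (n1a + n1b)%N.
Definition n0 := (n0a + n0b)%N.
Definition kab := (n1a * n0b)%N.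
Definition kba := (n0a * n1b)%N.
Definition kk := (n0 * n1)%N.

Definition label (u : inst) : bool :=
  if u.1 then nth false ya u.2 else nth false yb u.2.

Definition pa (k : nat) : inst := (true, k).
Definition pb (k : nat) : inst := (false, k).

Definition instA : seq inst := map pa (iota 0 na).
Definition instB : seq inst := map pb (iota 0 nb).
Definition instAll : seq inst := instA ++ instB.

(* u precedes (is ranked higher than) v in the list o *)
Definition precedes (o : seq inst) (u v : inst) : bool := (index u o < index v o)%N.

Definition cross_ordering (o : seq inst) : Prop :=
  [seq x <- o | x.1] = instA /\ [seq x <- o | ~~ x.1] = instB.

Definition npairs (us vs : seq inst) (o : seq inst) : nat :=
  \sum_(u <- us) \sum_(v <- vs) (label u && ~~ label v && precedes o u v).

Definition AUC (o : seq inst) : R := (npairs instAll instAll o)%:R / (n1 * n0)%:R.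
Definition xAUCab (o : seq inst) : R := (npairs instA instB o)%:R / (n1a * n0b)%:R.
Definition xAUCba (o : seq inst) : R := (npairs instB instA o)%:R / (n1b * n0a)%:R.

Definition Js (lam : R) (o : seq inst) : R := AUC o - lam * (xAUCab o - xAUCba o).

(* q interleaves p^{a(1..i)} and p^{b(1..j)} *)
Definition q_to_b (j : nat) (q : seq inst) : seq inst := q ++ map pb (iota j (nb - j)).
Definition q_to_a (i : nat) (q : seq inst) : seq inst := q ++ map pa (iota i (na - i)).

Definition Aq (i j : nat) (q : seq inst) : R :=
  (npairs (map pa (iota 0 i)) instB (q_to_b j q))%:R / (n1a * n0b)%:R.
Definition Bq (i j : nat) (q : seq inst) : R :=
  (npairs (map pb (iota 0 j)) instA (q_to_a i q))%:R / (n1b * n0a)%:R.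

Definition Gs (lam : R) (i j : nat) (q : seq inst) : R :=
  (kab%:R / kk%:R) * Aq i j q + (kba%:R / kk%:R) * Bq i j q - lam * (Aq i j q - Bq i j q).

Fixpoint xOrder (lam : R) (i : nat) : nat -> seq inst :=
  match i with
  | 0 => fun j => map pb (iota 0 j)
  | i'.+1 =>
      fix Oj (j : nat) : seq inst :=
        match j with
        | 0 => map pa (iota 0 i'.+1)
        | j'.+1 =>
            let c1 := rcons (xOrder lam i' j'.+1) (pa i') in
            let c2 := rcons (Oj j') (pb j') in
            if Gs lam i'.+1 j'.+1 c2 < Gs lam i'.+1 j'.+1 c1 then c1 else c2
        end
  end.

End XOrder.

From mathcomp Require Import all_boot all_order all_algebra ring lra.
Set Implicit Arguments. Unset Strict Implicit. Unset Printing Implicit Defensive.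
Import Order.TTheory GRing.Theory Num.Theory.

(* Call q an (i,j)-interleaving when its group-a elements are exactly
   p^{a(1..i)} and its group-b elements exactly p^{b(1..j)}, in order; the
   cross-group orderings are the (n^a,n^b)-interleavings.  The proof rests on
   one observation: appending p^{a(i+1)} to an (i,j)-interleaving q changes
   the number of pairs counted by A by an amount depending only on (i,j)
   (p^{a(i+1)} overtakes exactly the elements p^{b(j+1..n^b)} of the
   completion of q), and leaves the count of B unchanged; symmetrically for
   p^{b(j+1)}.  Hence the increment of G^s along either move is independent
   of q, so the DP table entry O(i,j) maximizes G^s over all
   (i,j)-interleavings (induction on (i,j), splitting an interleaving at its
   last element).  Finally, on cross-group orderings the within-group pairs
   are fixed, so J^s = constant + G^s(., n^a, n^b), and the theorem follows. *)

Lemma index_lt_filter (T : eqType) (p : pred T) (s : seq T) (u v : T) :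
  p u -> p v -> (index u s < index v s) = (index u (filter p s) < index v (filter p s)).
Proof.
move=> pu pv; elim: s => [//|w s IH] /=.
have [{w}->|wu] := eqVneq w u; first by rewrite pu /= eqxx; case: eqVneq.
have [wv|wv] := eqVneq w v; first by rewrite -wv in pv *; rewrite pv /= eqxx (negbTE wu).
by case: ifP => _ /=; rewrite ?(negbTE wu) ?(negbTE wv) ltnS IH.
Qed.

Lemma map_iotaS (T : Type) (f : nat -> T) (i : nat) :
  map f (iota 0 i.+1) = rcons (map f (iota 0 i)) (f i).
Proof. by rewrite -addn1 iotaD map_cat cats1. Qed.

Lemma pa_inj : injective pa. Proof. by move=> x y [->]. Qed.
Lemma pb_inj : injective pb. Proof. by move=> x y [->]. Qed.

Lemma precedes_insert (s1 s2 : seq inst) (x u v : inst) : u != x -> v != x ->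
  precedes (s1 ++ x :: s2) u v = precedes (s1 ++ s2) u v.
Proof.
move=> ux vx; rewrite /precedes !index_cat /= eq_sym (negbTE ux) eq_sym (negbTE vx).
have [us|_] := boolP (u \in s1); have [vs|_] := boolP (v \in s1) => //.
- by rewrite !ltn_addr // index_mem.
- have lt_v : index v s1 < size s1 by rewrite index_mem.
  by rewrite !ltnNge !(leq_trans (ltnW lt_v) (leq_addr _ _)).
- by rewrite !addnS ltnS ltn_add2l.
Qed.

Lemma precedes_inserted (s1 s2 : seq inst) (x v : inst) : x \notin s1 -> v != x ->
  precedes (s1 ++ x :: s2) x v = (v \notin s1).
Proof.
move=> xs vx; rewrite /precedes !index_cat (negbTE xs) /= eqxx addn0 eq_sym (negbTE vx).
have [vs|_] /= := boolP (v \in s1); last by rewrite addnS ltnS leq_addr.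
by apply/negbTE; rewrite -leqNgt ltnW // index_mem.
Qed.

Definition interleaving (i j : nat) (q : seq inst) : Prop :=
  [seq x <- q | x.1] = map pa (iota 0 i) /\ [seq x <- q | ~~ x.1] = map pb (iota 0 j).

Section Interleavings.
Variables (i j : nat) (q : seq inst).
Hypothesis q_inter : interleaving i j q.

Lemma mem_interleaving_a (k : nat) : (pa k \in q) = (k < i).
Proof.
have <- : (pa k \in [seq x <- q | x.1]) = (pa k \in q) by rewrite mem_filter.
by rewrite q_inter.1 (mem_map pa_inj) mem_iota.
Qed.

Lemma mem_interleaving_b (k : nat) : (pb k \in q) = (k < j).
Proof.
have <- : (pb k \in [seq x <- q | ~~ x.1]) = (pb k \in q) by rewrite mem_filter.
by rewrite q_inter.2 (mem_map pb_inj) mem_iota.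
Qed.

Lemma interleaving_rcons_a : interleaving i.+1 j (rcons q (pa i)).
Proof. by case: q_inter => ha hb; rewrite /interleaving !filter_rcons ha hb map_iotaS. Qed.

Lemma interleaving_rcons_b : interleaving i j.+1 (rcons q (pb j)).
Proof. by case: q_inter => ha hb; rewrite /interleaving !filter_rcons ha hb map_iotaS. Qed.

End Interleavings.

Lemma interleaving_0b (i : nat) (q : seq inst) :
  interleaving i 0 q <-> q = map pa (iota 0 i).
Proof.
split=> [[<-]|->]; last by split; elim: (iota 0 i) => //= k s ->.
by elim: q => //= -[[] k] q IH //= /IH <-.
Qed.

Lemma interleaving_a0 (j : nat) (q : seq inst) :
  interleaving 0 j q <-> q = map pb (iota 0 j).
Proof.
split=> [[ha <-]|->]; last by split; elim: (iota 0 j) => //= k s ->.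
by elim: q ha => //= -[[] k] q IH //= /IH <-.
Qed.

Lemma interleaving_last (i j : nat) (q : seq inst) : interleaving i.+1 j.+1 q ->
  exists q', (q = rcons q' (pa i) /\ interleaving i j.+1 q') \/
             (q = rcons q' (pb j) /\ interleaving i.+1 j q').
Proof.
case/lastP: q => [|q' [[] k]].
- by case=> /(congr1 size); rewrite size_map size_iota.
- rewrite /interleaving !filter_rcons (map_iotaS pa) /= => -[/rcons_inj [= ha ->] hb].
  by exists q'; left.
- rewrite /interleaving !filter_rcons (map_iotaS pb) /= => -[ha /rcons_inj [= hb ->]].
  by exists q'; right.
Qed.

Section PairCounts.
Variables ya yb : seq bool.

Local Notation npairs := (npairs ya yb).
Local Notation label := (label ya yb).

Lemma npairs_catl (us1 us2 vs o : seq inst) :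
  npairs (us1 ++ us2) vs o = (npairs us1 vs o + npairs us2 vs o)%N.
Proof. by rewrite /npairs big_cat. Qed.

Lemma npairs_catr (us vs1 vs2 o : seq inst) :
  npairs us (vs1 ++ vs2) o = (npairs us vs1 o + npairs us vs2 o)%N.
Proof. by rewrite /npairs -big_split; apply: eq_bigr => u _; rewrite big_cat. Qed.

Lemma npairs_insert (us vs s1 s2 : seq inst) (x : inst) :
  x \notin us -> x \notin vs -> x \notin s1 ->
  npairs (rcons us x) vs (s1 ++ x :: s2) =
  (npairs us vs (s1 ++ s2) + \sum_(v <- vs) (label x && ~~ label v && (v \notin s1)))%N.
Proof.
move=> x_us x_vs x_s1; rewrite -cats1 npairs_catl /npairs big_seq1.
have ne_x (w : inst) (ws : seq inst) : x \notin ws -> w \in ws -> w != x.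
  by move=> xw wws; apply: contraNneq xw => <-.
congr (_ + _)%N.
- apply: eq_big_seq => u uus; apply: eq_big_seq => v vvs.
  by rewrite precedes_insert ?(ne_x _ _ x_us uus) ?(ne_x _ _ x_vs vvs).
- by apply: eq_big_seq => v vvs; rewrite precedes_inserted ?(ne_x _ _ x_vs vvs).
Qed.

Lemma npairsA_step (i j : nat) (q : seq inst) : interleaving i j q ->
  npairs (map pa (iota 0 i.+1)) (instB yb) (q_to_b yb j (rcons q (pa i))) =
  (npairs (map pa (iota 0 i)) (instB yb) (q_to_b yb j q) +
   \sum_(v <- instB yb) (label (pa i) && ~~ label v && (j <= v.2)))%N.
Proof.
move=> q_inter; rewrite /q_to_b cat_rcons map_iotaS npairs_insert.
- congr (_ + _)%N; apply: eq_big_seq => _ /mapP[k _ ->].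
  by rewrite (mem_interleaving_b q_inter) -leqNgt.
- by rewrite (mem_map pa_inj) mem_iota ltnn andbF.
- by apply/mapP => -[].
- by rewrite (mem_interleaving_a q_inter) ltnn.
Qed.

Lemma q_to_a_rcons (i : nat) (q : seq inst) : (i < na ya)%N ->
  q_to_a ya i.+1 (rcons q (pa i)) = q_to_a ya i q.
Proof. by move=> lt_i; rewrite /q_to_a cat_rcons -(subnSK lt_i). Qed.

Lemma npairsB_step (i j : nat) (q : seq inst) : interleaving i j q ->
  npairs (map pb (iota 0 j.+1)) (instA ya) (q_to_a ya i (rcons q (pb j))) =
  (npairs (map pb (iota 0 j)) (instA ya) (q_to_a ya i q) +
   \sum_(v <- instA ya) (label (pb j) && ~~ label v && (i <= v.2)))%N.
Proof.
move=> q_inter; rewrite /q_to_a cat_rcons map_iotaS npairs_insert.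
- congr (_ + _)%N; apply: eq_big_seq => _ /mapP[k _ ->].
  by rewrite (mem_interleaving_a q_inter) -leqNgt.
- by rewrite (mem_map pb_inj) mem_iota ltnn andbF.
- by apply/mapP => -[].
- by rewrite (mem_interleaving_b q_inter) ltnn.
Qed.

Lemma q_to_b_rcons (j : nat) (q : seq inst) : (j < nb yb)%N ->
  q_to_b yb j.+1 (rcons q (pb j)) = q_to_b yb j q.
Proof. by move=> lt_j; rewrite /q_to_b cat_rcons -(subnSK lt_j). Qed.

Lemma npairs_withinA (o : seq inst) : cross_ordering ya yb o ->
  npairs (instA ya) (instA ya) o = npairs (instA ya) (instA ya) (instA ya).
Proof.
case=> ha _; apply: eq_big_seq => _ /mapP[k _ ->]; apply: eq_big_seq => _ /mapP[l _ ->].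
by rewrite /precedes (@index_lt_filter _ (fun x => x.1)) // ha.
Qed.

Lemma npairs_withinB (o : seq inst) : cross_ordering ya yb o ->
  npairs (instB yb) (instB yb) o = npairs (instB yb) (instB yb) (instB yb).
Proof.
case=> _ hb; apply: eq_big_seq => _ /mapP[k _ ->]; apply: eq_big_seq => _ /mapP[l _ ->].
by rewrite /precedes (@index_lt_filter _ (fun x => ~~ x.1)) // hb.
Qed.

End PairCounts.

Local Open Scope ring_scope.

Section Optimality.
Variable R : realFieldType.
Variables (ya yb : seq bool) (lam : R).

Local Notation G := (Gs ya yb lam).
Local Notation O := (xOrder ya yb lam).

Lemma Gs_gain_a (i j : nat) (q q' : seq inst) :
  (i < na ya)%N -> interleaving i j q -> interleaving i j q' ->
  G i.+1 j (rcons q (pa i)) - G i j q = G i.+1 j (rcons q' (pa i)) - G i j q'.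
Proof.
move=> lt_i q_inter q'_inter; rewrite /Gs /Aq /Bq !q_to_a_rcons //.
by rewrite (npairsA_step ya yb q_inter) (npairsA_step ya yb q'_inter) !natrD; ring.
Qed.

Lemma Gs_gain_b (i j : nat) (q q' : seq inst) :
  (j < nb yb)%N -> interleaving i j q -> interleaving i j q' ->
  G i j.+1 (rcons q (pb j)) - G i j q = G i j.+1 (rcons q' (pb j)) - G i j q'.
Proof.
move=> lt_j q_inter q'_inter; rewrite /Gs /Aq /Bq !q_to_b_rcons //.
by rewrite (npairsB_step ya yb q_inter) (npairsB_step ya yb q'_inter) !natrD; ring.
Qed.

Lemma xOrder_optimal (i j : nat) : (i <= na ya)%N -> (j <= nb yb)%N ->
  interleaving i j (O i j) /\ forall q, interleaving i j q -> G i j q <= G i j (O i j).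
Proof.
elim: i j => [|i IHi] j.
  by move=> _ _; split=> [|q /interleaving_a0 ->] //; apply/interleaving_a0.
elim: j => [|j IHj] le_i le_j.
  by split=> [|q /interleaving_0b ->] //; apply/interleaving_0b.
set ca := rcons (O i j.+1) (pa i); set cb := rcons (O i.+1 j) (pb j).
have -> : O i.+1 j.+1 = if G i.+1 j.+1 cb < G i.+1 j.+1 ca then ca else cb by [].
have [inter_a opt_a] := IHi j.+1 (ltnW le_i) le_j.
have [inter_b opt_b] := IHj le_i (ltnW le_j).
have below_candidate q : interleaving i.+1 j.+1 q ->
    G i.+1 j.+1 q <= G i.+1 j.+1 ca \/ G i.+1 j.+1 q <= G i.+1 j.+1 cb.
  case/interleaving_last => q' [[-> q'_inter]|[-> q'_inter]].
  - left; have := Gs_gain_a le_i q'_inter inter_a; have := opt_a _ q'_inter; lra.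
  - right; have := Gs_gain_b le_j q'_inter inter_b; have := opt_b _ q'_inter; lra.
case: ltP => [lt_ba|le_ab].
- split=> [|q /below_candidate[//|le_b]]; first exact: interleaving_rcons_a.
  exact: le_trans le_b (ltW lt_ba).
- split=> [|q /below_candidate[le_a|//]]; first exact: interleaving_rcons_b.
  exact: le_trans le_a le_ab.
Qed.

Lemma Js_Gs (o : seq inst) :
  (0 < n1a ya)%N -> (0 < n0a ya)%N -> (0 < n1b yb)%N -> (0 < n0b yb)%N ->
  cross_ordering ya yb o ->
  Js ya yb lam o =
  (npairs ya yb (instA ya) (instA ya) (instA ya)
   + npairs ya yb (instB yb) (instB yb) (instB yb))%:R / (n1 ya yb * n0 ya yb)%:R
  + G (na ya) (nb yb) o.
Proof.
move=> pos1a pos0a pos1b pos0b o_cross.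
rewrite /Js /AUC /xAUCab /xAUCba /Gs /Aq /Bq /q_to_b /q_to_a !subnn !cats0.
rewrite -/(instA ya) -/(instB yb) /instAll npairs_catl !npairs_catr.
rewrite (npairs_withinA o_cross) (npairs_withinB o_cross).
rewrite /kab /kba /kk /n1 /n0 !natrM !natrD.
have nz (m : nat) : (0 < m)%N -> m%:R != 0 :> R by rewrite pnatr_eq0 -lt0n.
have nz1 : (n1a ya)%:R + (n1b yb)%:R != 0 :> R by rewrite -natrD nz // addn_gt0 pos1a.
have nz0 : (n0a ya)%:R + (n0b yb)%:R != 0 :> R by rewrite -natrD nz // addn_gt0 pos0a.
by field; rewrite !nz // nz1 nz0.
Qed.

End Optimality.

Theorem mainTheorem5 (R : realFieldType) (ya yb : seq bool) (lam : R) :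
  (0 < n1a ya)%N -> (0 < n0a ya)%N -> (0 < n1b yb)%N -> (0 < n0b yb)%N ->
  0 <= lam ->
  let O := xOrder ya yb lam (na ya) (nb yb) in
  cross_ordering ya yb O /\
  (forall o, cross_ordering ya yb o -> Js ya yb lam o <= Js ya yb lam O).
Proof.
move=> pos1a pos0a pos1b pos0b _ O.
(* cross-group orderings are exactly the (n^a,n^b)-interleavings *)
have [O_cross O_opt] := xOrder_optimal lam (leqnn (na ya)) (leqnn (nb yb)).
split=> // o o_cross.
rewrite (Js_Gs _ pos1a pos0a pos1b pos0b o_cross).
rewrite [Js _ _ _ O](Js_Gs _ pos1a pos0a pos1b pos0b O_cross) lerD2l.
exact: O_opt.
Qed.
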